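(* If $G$ is a graph of order $n$, then $\operatorname{lb}_1(G)\leq\frac{n-1}{2}$, with equality if and only if $G$ is a conference graph.
   Context: All graphs are finite and simple. For a graph $G$ and a partition $\mathcal{P}$ of $V(G)$, the quotient trigraph $G/\mathcal{P}$ has vertex set $\mathcal{P}$; two distinct parts $U,W$ are joined by a black edge if every pair $\{u,w\}$ with $u\in U,w\in W$ is an edge of $G$, are non-adjacent if no such pair is an edge, and are joined by a red edge otherwise; the red degree of a part is the number of red edges incident to it. For $|V(G)|\geq 2$, $\operatorname{lb}_1(G)$ is the minimum, over all 2-element subsets $\{u,v\}\subseteq V(G)$, of the maximum red degree of $G/\mathcal{P}$, where $\mathcal{P}$ is the partition whose only non-singleton part is $\{u,v\}$; for $|V(G)|=1$, $\operatorname{lb}_1(G)\coloneqq 0$. A graph $G$ of order $n$ is strongly regular with parameters $(n,d,\lambda,\mu)$ if it is $d$-regular and any two distinct adjacent vertices have exactly $\lambda$ common neighbors while any two distinct non-adjacent vertices have exactly $\mu$ common neighbors. A conference graph is a strongly regular graph with parameters $(n,\frac{n-1}{2},\frac{n-5}{4},\frac{n-1}{4})$. *)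

From mathcomp Require Import all_boot all_order all_algebra.
Set Implicit Arguments. Unset Strict Implicit. Unset Printing Implicit Defensive.
Import Order.TTheory GRing.Theory Num.Theory.

(* A finite simple graph: vertex type T : finType, adjacency e : rel T,
   assumed symmetric and irreflexive (hypotheses of the theorem). *)

Section Defs.
Variables (T : finType) (e : rel T).

Definition red_edge (U W : {set T}) : bool :=
  [exists u in U, exists w in W, e u w] &&
  [exists u in U, exists w in W, ~~ e u w].

Definition red_degree (P : {set {set T}}) (U : {set T}) : nat :=
  #|[set W in P | (W != U) && red_edge U W]|.

Definition max_red_degree (P : {set {set T}}) : nat :=
  \max_(U in P) red_degree P U.

Definition pair_partition (u v : T) : {set {set T}} :=
  [set [set u; v]] :|: [set [set w] | w in [set w | (w != u) && (w != v)]].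

(* lb_1(G): minimum over 2-subsets {u,v} (enumerated as ordered pairs with
   u != v) of the max red degree of G/P_{uv}; 0 if |V(G)| = 1.
   The neutral element #|T| of the minimum is irrelevant when |V(G)| >= 2,
   since the index range is then nonempty. *)
Definition lb1 : nat :=
  if #|T| <= 1 then 0
  else \big[minn/#|T|]_(p : T * T | p.1 != p.2) max_red_degree (pair_partition p.1 p.2).

Local Open Scope ring_scope.
(* strongly regular with parameters (n,d,lambda,mu), taken in rat so that
   parameters such as (n-5)/4 make sense literally *)
Definition strongly_regular (n d lam mu : rat) : Prop :=
  [/\ (#|T|%:R = n),
      (forall x : T, (#|[set y | e x y]|%:R = d)),
      (forall x y : T, x != y -> e x y ->
         #|[set z | e x z && e y z]|%:R = lam) &
      (forall x y : T, x != y -> ~~ e x y ->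
         #|[set z | e x z && e y z]|%:R = mu)].

Definition conference_graph : Prop :=
  let n : rat := #|T|%:R in
  strongly_regular n ((n - 1) / 2) ((n - 5) / 4) ((n - 1) / 4).

End Defs.

From mathcomp Require Import all_boot all_order all_algebra zify lra.
Import Order.TTheory GRing.Theory Num.Theory.

(* For u != v the maximum red degree of G/{u,v} is the number |S(u,v)| of
   vertices w outside {u,v} adjacent to exactly one of u, v: these are the red
   neighbours of the part {u,v}, and a singleton part has at most that one red
   neighbour.  Each w separates the ordered pairs in N(w) x non-N(w) and
   non-N(w) x N(w), so with d(w) = |N(w)| the sum of |S(u,v)| over ordered pairs
   is sum_w 2 d(w) (n-1-d(w)) <= n (n-1)^2 / 2 by AM-GM; the minimum lb_1 is at
   most the average, (n-1)/2.  Equality holds iff every d(w) and every |S(u,v)|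
   equals (n-1)/2, and since
     |S(u,v)| + 2 |N(u) /\ N(v)| + 2 [uv in E] = d(u) + d(v),
   this is exactly the conference graph condition. *)

Set Implicit Arguments.
Unset Strict Implicit.
Unset Printing Implicit Defensive.

Lemma exists_in_set1 (T : finType) (p : pred T) w :
  [exists a in [set w], p a] = p w.
Proof.
by apply/existsP/idP => [[a /andP[/set1P -> //]] | pw]; exists w; rewrite set11.
Qed.

Lemma exists_in_set2 (T : finType) (p : pred T) u v :
  [exists a in [set u; v], p a] = p u || p v.
Proof.
apply/existsP/orP => [[a /andP[/set2P[->|->] pa]] | [pu|pv]];
  [by left | by right | |].
- by exists u; rewrite set21.
- by exists v; rewrite set22.
Qed.

Lemma card_sum_mem (T : finType) (A : {set T}) : #|A| = \sum_x (x \in A).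
Proof. by rewrite -sum1_card big_mkcond. Qed.

Lemma natr_eq_ratio (a b c q : nat) : (0 < q)%N ->
  ((a%:R : rat) = (b%:R - c%:R) / q%:R)%R <-> (q * a + c = b)%N.
Proof.
move=> q_gt0; have q_neq0 : (q%:R != 0 :> rat)%R by rewrite pnatr_eq0 -lt0n.
split => [E | <-]; last by rewrite natrD natrM addrK mulrAC divff ?mul1r.
by apply/eqP; rewrite -(eqr_nat rat) natrD natrM E mulrC divfK // subrK.
Qed.

Section PairPartition.
Variables (T : finType) (e : rel T).
Hypotheses (e_sym : symmetric e) (e_irr : irreflexive e).

Lemma red_edge_pair_single u v w :
  red_edge e [set u; v] [set w] = (e u w != e v w).
Proof.
rewrite /red_edge !exists_in_set2 !exists_in_set1.
by case: (e u w); case: (e v w).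
Qed.

Lemma red_edge_single_pair u v w :
  red_edge e [set w] [set u; v] = (e u w != e v w).
Proof.
rewrite /red_edge !exists_in_set1 !exists_in_set2 (e_sym w u) (e_sym w v).
by case: (e u w); case: (e v w).
Qed.

Lemma red_edge_singles x w : red_edge e [set w] [set x] = false.
Proof. by rewrite /red_edge !exists_in_set1; case: (e w x). Qed.

Definition separators u v := [set w | (w != u) && (w != v) && (e u w != e v w)].

Lemma red_degree_pair u v : u != v ->
  red_degree e (pair_partition u v) [set u; v] = #|separators u v|.
Proof.
move=> uv; rewrite /red_degree -(card_imset (separators u v) set1_inj).
apply: eq_card => W; rewrite !inE; apply/andP/imsetP => [[/orP[/eqP->|]] | [w]].
- by rewrite eqxx.
- case/imsetP=> w; rewrite inE => /andP[wu wv] -> /andP[_].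
  by rewrite red_edge_pair_single => sep; exists w; rewrite // inE wu wv.
- rewrite inE => /andP[/andP[wu wv] sep] ->; split.
    by apply/orP; right; apply/imsetP; exists w; rewrite // inE wu wv.
  rewrite red_edge_pair_single sep andbT; apply: contraNneq wu => /setP/(_ u).
  by rewrite !inE eqxx => /eqP->.
Qed.

Lemma red_degree_single u v w : w != u -> w != v ->
  red_degree e (pair_partition u v) [set w] <= #|separators u v|.
Proof.
move=> wu wv; have [sep | nsep] := boolP (e u w != e v w).
- have sep_gt0 : 0 < #|separators u v|.
    by apply/card_gt0P; exists w; rewrite !inE wu wv.
  apply: (leq_trans _ sep_gt0); rewrite -(cards1 [set u; v]).
  apply/subset_leq_card/subsetP => W.
  rewrite !inE => /andP[/orP[//|/imsetP[x _ ->]]].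
  by rewrite red_edge_singles andbF.
- suff -> : red_degree e (pair_partition u v) [set w] = 0 by [].
  apply/eqP; rewrite cards_eq0; apply/eqP/setP => W; rewrite !inE.
  case: (W =P [set u; v]) => [->|_] /=.
    by rewrite red_edge_single_pair (negbTE nsep) andbF.
  by apply/negbTE/and3P => -[/imsetP[x _ ->] _]; rewrite red_edge_singles.
Qed.

Lemma max_red_degree_pair u v : u != v ->
  max_red_degree e (pair_partition u v) = #|separators u v|.
Proof.
move=> uv; apply/eqP; rewrite eqn_leq; apply/andP; split.
  apply/bigmax_leqP => U; rewrite !inE => /orP[/eqP->|/imsetP[w]].
    by rewrite red_degree_pair.
  by rewrite inE => /andP[wu wv] ->; apply: red_degree_single.
by rewrite -red_degree_pair //; apply: leq_bigmax_cond; rewrite !inE eqxx.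
Qed.

Lemma lb1_le_separators u v : u != v -> lb1 e <= #|separators u v|.
Proof.
move=> uv; rewrite /lb1; case: ifP => // _.
by rewrite -max_red_degree_pair //; apply: (bigmin_le_cond #|T| (j := (u, v))).
Qed.

Lemma lb1_attained : 1 < #|T| ->
  exists u v, u != v /\ lb1 e = #|separators u v|.
Proof.
move=> n_gt1; have [u [v [_ _ uv]]] := card_gt1P n_gt1.
have le_card (p : T * T) : p.1 != p.2 ->
    max_red_degree e (pair_partition p.1 p.2) <= #|T|.
  by move=> p12; rewrite max_red_degree_pair ?max_card.
rewrite /lb1 leqNgt n_gt1 /=.
have [[x y] /= xy ->] := eq_bigmin (x := #|T|) (u, v) _ _ uv le_card.
by exists x, y; rewrite max_red_degree_pair.
Qed.

Definition nbhd x := [set y | e x y].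
Definition non_nbhd x := [set y | (y != x) && ~~ e x y].

Lemma card_nbhd_non_nbhd x : #|nbhd x| + #|non_nbhd x| = #|T|.-1.
Proof.
rewrite -(cardsC1 x) -cardsUI.
have -> : nbhd x :&: non_nbhd x = set0.
  by apply/setP => y; rewrite !inE; case: (e x y); rewrite ?andbF.
rewrite cards0 addn0; apply: eq_card => y; rewrite !inE.
by case: eqVneq => [->|]; rewrite ?e_irr //; case: (e x y).
Qed.

Lemma separated_pairsE w : [set p : T * T | w \in separators p.1 p.2] =
  setX (nbhd w) (non_nbhd w) :|: setX (non_nbhd w) (nbhd w).
Proof.
apply/setP => -[u v]; rewrite !inE /= (e_sym u) (e_sym v) ![w == _]eq_sym.
case: eqVneq => [->|_]; case: eqVneq => [->|_]; rewrite ?e_irr ?andbF //=.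
by case: (e w u); case: (e w v).
Qed.

Lemma card_separated_pairs w :
  #|[set p : T * T | w \in separators p.1 p.2]|
    = 2 * (#|nbhd w| * #|non_nbhd w|).
Proof.
have disj : setX (nbhd w) (non_nbhd w) :&: setX (non_nbhd w) (nbhd w) = set0.
  by apply/setP => -[u v]; rewrite !inE; case: (e w u); rewrite ?andbF.
by rewrite separated_pairsE cardsU disj cards0 !cardsX; lia.
Qed.

Lemma sum_card_separators :
  \sum_(p : T * T) #|separators p.1 p.2|
    = \sum_w 2 * (#|nbhd w| * #|non_nbhd w|).
Proof.
rewrite (eq_bigr _ (fun p _ => card_sum_mem (separators p.1 p.2))) exchange_big.
apply: eq_bigr => w _.
rewrite -card_separated_pairs card_sum_mem.
by apply: eq_bigr => p _; rewrite inE.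
Qed.

Lemma card_offdiag : #|[set p : T * T | p.1 != p.2]| = #|T| * #|T|.-1.
Proof.
transitivity (\sum_(u : T) \sum_(v : T) (u != v : nat)).
  by rewrite pair_bigA card_sum_mem; apply: eq_bigr => -[u v] _; rewrite inE.
rewrite -sum_nat_const; apply: eq_bigr => u _.
rewrite -(cardsC1 u) card_sum_mem; apply: eq_bigr => v _.
by rewrite !inE eq_sym.
Qed.

Lemma separators_diag u : separators u u = set0.
Proof. by apply/setP => w; rewrite !inE eqxx andbF. Qed.

Lemma lb1_leqif_sum_separators :
  #|T| * #|T|.-1 * lb1 e <= \sum_(p : T * T) #|separators p.1 p.2|
    ?= iff [forall (p : T * T | p.1 != p.2), lb1 e == #|separators p.1 p.2|].
Proof.
rewrite (bigID (fun p : T * T => p.1 != p.2)) /= [X in _ + X]big1 ?addn0;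
  last first.
  by move=> [u v] /negPn/eqP /= ->; rewrite separators_diag cards0.
rewrite -card_offdiag -sum_nat_cond_const.
by apply: leqif_sum => -[u v] /= uv; apply/leqif_eq/lb1_le_separators.
Qed.

Lemma sum_separators_leqif_square :
  2 * \sum_(p : T * T) #|separators p.1 p.2| <= #|T| * #|T|.-1 * #|T|.-1
    ?= iff [forall w, #|nbhd w| == #|non_nbhd w|].
Proof.
rewrite sum_card_separators big_distrr /= -mulnA -sum_nat_const.
apply: leqif_sum => w _; rewrite [2 * (2 * _)]mulnA -(card_nbhd_non_nbhd w).
exact: nat_AGM2.
Qed.

Lemma lb1_leqif :
  #|T| * #|T|.-1 * (2 * lb1 e) <= #|T| * #|T|.-1 * #|T|.-1
    ?= iff [forall (p : T * T | p.1 != p.2), lb1 e == #|separators p.1 p.2|]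
        && [forall w, #|nbhd w| == #|non_nbhd w|].
Proof.
rewrite mulnCA; apply: leqif_trans sum_separators_leqif_square.
have /leq_pmul2l-/mono_leqif-> : 0 < 2 by [].
exact: lb1_leqif_sum_separators.
Qed.

Lemma double_lb1_lt_card : 0 < #|T| -> 2 * lb1 e < #|T|.
Proof.
move=> n_gt0; have [n_le1 | n_gt1] := leqP #|T| 1; first by rewrite /lb1 n_le1.
have nm_gt0 : 0 < #|T| * #|T|.-1 by rewrite muln_gt0; lia.
suff : 2 * lb1 e <= #|T|.-1 by lia.
by rewrite -(leq_pmul2l nm_gt0) lb1_leqif.
Qed.

Lemma lb1_half_iff_separators : 0 < #|T| ->
  2 * lb1 e + 1 = #|T| <->
  (forall w, 2 * #|nbhd w| + 1 = #|T|) /\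
  (forall u v, u != v -> 2 * #|separators u v| + 1 = #|T|).
Proof.
move=> n_gt0; have [n_le1 | n_gt1] := leqP #|T| 1.
  rewrite /lb1 n_le1; split=> _; last lia.
  split=> [w | u v uv]; first by have := card_nbhd_non_nbhd w; lia.
  by rewrite (fintype_le1P n_le1 u v) eqxx in uv.
split=> [half | [reg sep]]; last first.
  by have [u [v [uv ->]]] := lb1_attained n_gt1; apply: sep.
have nm_gt0 : 0 < #|T| * #|T|.-1 by rewrite muln_gt0; lia.
have : 2 * lb1 e == #|T|.-1 by apply/eqP; lia.
rewrite -(eqn_pmul2l nm_gt0) (eq_leqif lb1_leqif).
case/andP => /forall_inP sep /forallP reg; split=> [w | u v uv].
  by have := card_nbhd_non_nbhd w; have := eqP (reg w); lia.
by rewrite -(eqP (sep (u, v) uv)).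
Qed.

Definition common x y := [set z | e x z && e y z].

Lemma card_separators_common x y : x != y ->
  #|separators x y| + 2 * #|common x y| + 2 * e x y = #|nbhd x| + #|nbhd y|.
Proof.
move=> xy.
have pointwise w : (w \in separators x y) + 2 * (w \in common x y)
    + (w \in [set x; y]) * e x y = (w \in nbhd x) + (w \in nbhd y).
  rewrite !inE; case: (eqVneq w x) => [->|wx].
    by rewrite e_irr (e_sym y); case: (e x y).
  case: (eqVneq w y) => [->|wy]; first by rewrite e_irr; case: (e x y).
  by case: (e x w); case: (e y w).
rewrite (card_sum_mem (nbhd x)) (card_sum_mem (nbhd y)) -big_split /=.
rewrite -(eq_bigr _ (fun w _ => pointwise w)) 2!big_split.
rewrite -big_distrr -big_distrl.
by rewrite -!card_sum_mem cards2 xy.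
Qed.

Lemma separators_half_iff_common : (forall w, 2 * #|nbhd w| + 1 = #|T|) ->
  (forall u v, u != v -> 2 * #|separators u v| + 1 = #|T|) <->
  (forall u v, u != v -> 4 * #|common u v| + 4 * e u v + 1 = #|T|).
Proof.
move=> reg; split=> half u v uv; have := card_separators_common uv;
  have := reg u; have := reg v; have := half u v uv; lia.
Qed.

Lemma lb1_half_iff_conference : 0 < #|T| ->
  2 * lb1 e + 1 = #|T| <->
  (forall w, 2 * #|nbhd w| + 1 = #|T|) /\
  (forall u v, u != v -> 4 * #|common u v| + 4 * e u v + 1 = #|T|).
Proof.
move=> n_gt0; rewrite lb1_half_iff_separators //.
by split=> -[reg half]; split=> //; apply/(separators_half_iff_common reg).
Qed.

Lemma conference_graphE :
  conference_graph e <->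
  (forall w, 2 * #|nbhd w| + 1 = #|T|) /\
  (forall u v, u != v -> 4 * #|common u v| + 4 * e u v + 1 = #|T|).
Proof.
rewrite /conference_graph /strongly_regular /nbhd /common /=.
split=> [[_ reg adj nonadj] | [reg com]].
  split=> [w | u v uv]; first exact/(natr_eq_ratio _ _ 1 (q := 2) isT).
  case: (boolP (e u v)) => [euv | neuv].
    by move/(natr_eq_ratio _ _ 5 (q := 4) isT): (adj u v uv euv); lia.
  by move/(natr_eq_ratio _ _ 1 (q := 4) isT): (nonadj u v uv neuv); lia.
split=> // [w | u v uv euv | u v uv neuv].
- exact/(natr_eq_ratio _ _ 1 (q := 2) isT).
- apply/(natr_eq_ratio _ _ 5 (q := 4) isT).
  by have := com u v uv; rewrite euv; lia.
- apply/(natr_eq_ratio _ _ 1 (q := 4) isT).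
  by have := com u v uv; rewrite (negbTE neuv); lia.
Qed.

End PairPartition.

Local Open Scope ring_scope.

Theorem mainTheorem5 (T : finType) (e : rel T)
  (e_sym : symmetric e) (e_irr : irreflexive e) (T_nonempty : (0 < #|T|)%N) :
  let n : rat := #|T|%:R in
  ((lb1 e)%:R <= (n - 1) / 2) /\
  ((lb1 e)%:R = (n - 1) / 2 <-> conference_graph e).
Proof.
move=> n; rewrite {}/n; split.
  have := double_lb1_lt_card e_sym e_irr T_nonempty.
  by rewrite -(ler_nat rat) -natr1 natrM; lra.
rewrite (natr_eq_ratio _ _ 1 (q := 2)) // conference_graphE.
exact: lb1_half_iff_conference.
Qed.
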